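(* Let $q$ be an odd prime power, $a\in\mathbb{F}_q$, and $n\ge1$ an integer with $\gcd(n+1,q)=1$. Then the code $C_n(a)$ is LCD if and only if $$a\notin\{-\mu+\theta^i+\theta^{-i} : 1\le i\le n\}\cup\{\mu+\theta^i+\theta^{-i} : 1\le i\le n\},$$ where $\mu\in\mathbb{F}_{q^2}$ satisfies $\mu^2=-1$ and $\theta\in\overline{\mathbb{F}}_q$ is a primitive $2(n+1)$-th root of unity.
   Context: For $a\in\mathbb{F}_q$ and $n \ge 1$, $T_n(a)$ denotes the $n\times n$ symmetric tridiagonal Toeplitz matrix over $\mathbb{F}_q$ with all diagonal entries equal to $a$, all entries on the first super- and sub-diagonals equal to $1$, and all other entries $0$. $C_n(a)$ is the $[2n,n]$ linear code over $\mathbb{F}_q$ with generator matrix $[I_n \mid T_n(a)]$. A linear code $C$ is LCD (linear complementary dual) if $C\cap C^\perp=\{0\}$, where $C^\perp$ is the dual with respect to the standard Euclidean inner product. *)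

From HB Require Import structures.
From mathcomp Require Import all_boot all_order all_algebra all_field.
Set Implicit Arguments. Unset Strict Implicit. Unset Printing Implicit Defensive.
Import GRing.Theory.
Local Open Scope ring_scope.

Definition tridiag {F : nzRingType} (n : nat) (a : F) : 'M[F]_n :=
  \matrix_(i < n, j < n)
    (if i == j then a
     else if ((i.+1 == j)%N || (j.+1 == i)%N) then 1 else 0).

Definition gen_Cn {F : nzRingType} (n : nat) (a : F) : 'M[F]_(n, n + n) :=
  row_mx 1%:M (tridiag n a).

(* The code generated by G (its row space) is LCD: C ∩ C^⊥ = {0}, where
   C^⊥ = {u | u *m G^T = 0} is the row space of kermx G^T. *)
Definition is_LCD {F : fieldType} (k m : nat) (G : 'M[F]_(k, m)) : bool :=
  ((G :&: kermx G^T)%MS == 0).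

From HB Require Import structures.
From mathcomp Require Import all_boot all_order all_algebra all_field.
From mathcomp Require Import zify ring.
Import GRing.Theory.
Local Open Scope ring_scope.

(* 1. Massey's criterion: a code with a full-rank generator matrix G is LCD iff
      G G^T is invertible; for C_n(a) this Gram matrix is I + T_n(a)^2.
   2. In a field L with mu^2 = -1 (reached through f : F -> L, which preserves
      invertibility), I + T^2 = (T + mu I)(T - mu I), and T + c I = T_n(a + c):
      C_n(a) is LCD iff both T_n(f a + mu) and T_n(f a - mu) are invertible.
   3. A left-kernel vector of T_n(b) satisfies x_(k+1) = - b x_k - x_(k-1) with
      zero boundary values, hence is a multiple of the Chebyshev-type sequence
      U_k(-b); so T_n(b) is singular iff U_(n+1)(b) = 0, where U_k = [cheb k]
      is the rescaled Chebyshev polynomial of the second kind of degree k - 1.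
   4. From U_k(t + 1/t)(t - 1/t) = t^k - t^-k and a degree count, the roots of
      U_(n+1) are exactly theta^i + theta^-i, 1 <= i <= n, for theta a primitive
      2(n+1)-th root of unity.
   Combining 1-4 yields the theorem. *)

Lemma unitmx_kerP (K : fieldType) (m : nat) (A : 'M[K]_m) :
  A \in unitmx <-> (forall v : 'rV_m, v *m A = 0 -> v = 0).
Proof.
rewrite -row_free_unit; split; last exact: inj_row_free.
by move=> freeA v /eqP; rewrite mulmx_free_eq0 // => /eqP.
Qed.

Lemma LCD_Gram (K : fieldType) (k m : nat) (G : 'M[K]_(k, m)) :
  row_free G -> is_LCD G <-> G *m G^T \in unitmx.
Proof.
move=> freeG; rewrite unitmx_kerP /is_LCD; split.
- move=> /eqP capG0 v; rewrite mulmxA => vGG0.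
  have : (v *m G <= G :&: kermx G^T)%MS.
    by rewrite sub_capmx submxMl; apply/sub_kermxP.
  by rewrite capG0 submx0 mulmx_free_eq0 // => /eqP.
- move=> kerGG; apply/eqP; apply/eqP; rewrite -submx0; apply/row_subP => i.
  have := row_sub i (G :&: kermx G^T)%MS.
  rewrite sub_capmx => /andP[/submxP[D ->] /sub_kermxP].
  by rewrite -mulmxA => /kerGG ->; rewrite mul0mx sub0mx.
Qed.

Lemma tridiag_tr (R : nzRingType) (n : nat) (b : R) :
  (tridiag n b)^T = tridiag n b.
Proof. by apply/matrixP => i j; rewrite !mxE eq_sym orbC. Qed.

Lemma map_tridiag (R S : nzRingType) (f : {rmorphism R -> S}) (n : nat)
    (b : R) :
  map_mx f (tridiag n b) = tridiag n (f b).
Proof.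
apply/matrixP => i j; rewrite !mxE; case: (i == j) => //.
by case: (_ || _); rewrite ?rmorph1 ?rmorph0.
Qed.

Lemma tridiagD (R : nzRingType) (n : nat) (b c : R) :
  tridiag n b + c%:M = tridiag n (b + c).
Proof.
by apply/matrixP => i j; rewrite !mxE; case: (i == j); rewrite ?addr0.
Qed.

Lemma LCD_Cn (K : fieldType) (n : nat) (a : K) :
  is_LCD (gen_Cn n a) <-> 1%:M + tridiag n a *m tridiag n a \in unitmx.
Proof.
have -> : 1%:M + tridiag n a *m tridiag n a = gen_Cn n a *m (gen_Cn n a)^T.
  by rewrite /gen_Cn tr_row_mx mul_row_col trmx1 mulmx1 tridiag_tr.
apply: LCD_Gram; apply: inj_row_free => v.
rewrite /gen_Cn mul_mx_row mulmx1 => /eqP.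
by rewrite row_mx_eq0 => /andP[/eqP].
Qed.

(* Over a field L containing a square root mu of -1, I + T^2 factors as
   (T + mu I)(T - mu I), so invertibility splits into two shifted matrices. *)
Lemma Gram_factor {F L : fieldType} (f : {rmorphism F -> L}) (n : nat) (a : F)
    (mu : L) : mu ^+ 2 = -1 ->
  1%:M + tridiag n a *m tridiag n a \in unitmx <->
  tridiag n (f a + mu) \in unitmx /\ tridiag n (f a - mu) \in unitmx.
Proof.
move=> mu2; set T := tridiag n (f a).
have factorGram : 1%:M + T *m T = (T + mu%:M) *m (T + (- mu)%:M).
  rewrite mulmxDl !mulmxDr -scalar_mxM mulrN -expr2 mu2 opprK.
  by rewrite scalar_mxC !mul_scalar_mx scaleNr addrA subrK addrC.
rewrite -(map_unitmx f) map_mxD map_mx1 map_mxM map_tridiag -/T factorGram.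
by rewrite unitmx_mul !tridiagD; split => /andP.
Qed.

(* cheb k = U_(k-1)(X/2): rescaled Chebyshev polynomials of the second kind,
   cheb 0 = 0, cheb 1 = 1, cheb (k+2) = X cheb (k+1) - cheb k. *)
Fixpoint cheb (R : nzRingType) (k : nat) : {poly R} :=
  match k with
  | 0 => 0
  | k'.+1 => if k' is k''.+1 then 'X * cheb R k' - cheb R k'' else 1
  end.

Lemma chebSS (R : nzRingType) (k : nat) :
  cheb R k.+2 = 'X * cheb R k.+1 - cheb R k.
Proof. by []. Qed.

Lemma size_cheb (R : idomainType) (k : nat) : size (cheb R k) = k.
Proof.
suff [] : size (cheb R k) = k /\ size (cheb R k.+1) = k.+1 by [].
elim: k => [|k [IHk IHk1]]; first by rewrite /= size_poly0 size_poly1.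
have nz : cheb R k.+1 != 0 by rewrite -size_poly_eq0 IHk1.
split => //; rewrite chebSS size_polyDl mulrC size_mulX ?IHk1 //.
by rewrite size_polyN IHk; lia.
Qed.

Lemma cheb_oppX (R : comNzRingType) (k : nat) (x : R) :
  (cheb R k).[- x] = (-1) ^+ k.+1 * (cheb R k).[x].
Proof.
suff [] : (cheb R k).[- x] = (-1) ^+ k.+1 * (cheb R k).[x] /\
          (cheb R k.+1).[- x] = (-1) ^+ k.+2 * (cheb R k.+1).[x] by [].
elim: k => [|k [IHk IHk1]]; first by rewrite /= !hornerE; split; ring.
by split => //; rewrite chebSS !hornerE IHk IHk1 !exprS; ring.
Qed.

Lemma cheb_eval (K : fieldType) (t : K) (k : nat) : t != 0 ->
  (cheb K k).[t + t^-1] * (t - t^-1) = t ^+ k - t ^- k.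
Proof.
move=> t0.
suff [] : (cheb K k).[t + t^-1] * (t - t^-1) = t ^+ k - t ^- k /\
          (cheb K k.+1).[t + t^-1] * (t - t^-1) = t ^+ k.+1 - t ^- k.+1 by [].
elim: k => [|k [IHk IHk1]].
  by rewrite /= horner0 hornerC mul0r mul1r expr0 invr1 subrr expr1.
split => //; rewrite chebSS !hornerE mulrBl -mulrA IHk1 IHk !exprS !invfM.
by field; rewrite t0 expf_neq0.
Qed.

(* For theta a primitive 2(n+1)-th root of unity, twocos j plays the
   role of 2 cos(j pi / (n+1)). *)
Definition twocos {L : fieldType} (theta : L) (j : nat) : L :=
  theta ^+ j + theta ^- j.

Section ChebRoots.
Context {L : fieldType} {n : nat} {theta : L}.
Hypothesis theta_prim : (2 * n.+1)%N.-primitive_root theta.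

Lemma theta_neq0 : theta != 0.
Proof.
apply/eqP => theta0; have := prim_expr_order theta_prim.
by rewrite theta0 expr0n muln_eq0 /= => /eqP; rewrite eq_sym oner_eq0.
Qed.

Lemma theta_expr_neq0 (i : nat) : theta ^+ i != 0.
Proof. by rewrite expf_neq0 // theta_neq0. Qed.

Lemma theta_half : theta ^+ n.+1 = -1.
Proof.
have sq1 : theta ^+ n.+1 ^+ 2 = 1 by rewrite -exprM mulnC prim_expr_order.
have neq1 : theta ^+ n.+1 != 1.
  rewrite -(expr0 theta) (eq_prim_root_expr theta_prim) mod0n modn_small //.
  lia.
have /eqP : (theta ^+ n.+1 - 1) * (theta ^+ n.+1 + 1) = 0.
  by rewrite -subr_sqr sq1 expr1n subrr.
by rewrite mulf_eq0 subr_eq0 (negbTE neq1) addr_eq0 => /eqP.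
Qed.

Lemma theta_expr_inj (i j : nat) : (i < 2 * n.+1)%N -> (j < 2 * n.+1)%N ->
  (theta ^+ i == theta ^+ j) = (i == j).
Proof.
by move=> ilt jlt; rewrite (eq_prim_root_expr theta_prim) !modn_small.
Qed.

(* Each twocos theta j, 1 <= j <= n, is a root of cheb (n+1): with t = theta^j,
   t^(n+1) = t^-(n+1) = (-1)^j while t - 1/t <> 0. *)
Lemma cheb_twocos (j : nat) :
  (1 <= j <= n)%N -> (cheb L n.+1).[twocos theta j] = 0.
Proof.
move=> jn; set t := theta ^+ j.
have t_sub_inv_neq0 : t - t^-1 != 0.
  apply/eqP => /eqP; rewrite subr_eq0
    -[_ == _](inj_eq (mulIf (theta_expr_neq0 j))).
  rewrite mulVf ?theta_expr_neq0 // -expr2 -exprM -(expr0 theta).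
  by rewrite theta_expr_inj; lia.
have tn : t ^+ n.+1 = (-1) ^+ j by rewrite -exprM mulnC exprM theta_half.
have /eqP := @cheb_eval L t n.+1 (theta_expr_neq0 j).
rewrite -/t tn -[(-1) ^- j]exprVn invrN1 subrr mulf_eq0 (negbTE t_sub_inv_neq0).
by rewrite orbF => /eqP.
Qed.

Lemma twocos_inj (i j : nat) : (1 <= i <= n)%N -> (1 <= j <= n)%N ->
  twocos theta i = twocos theta j -> i = j.
Proof.
move=> irange jrange eqij.
have /eqP : (theta ^+ i - theta ^+ j) * (1 - theta ^- i * theta ^- j) = 0.
  rewrite -[RHS](subrr (twocos theta j)) -{1}eqij /twocos.
  by field; rewrite !theta_expr_neq0.
rewrite mulf_eq0 !subr_eq0 theta_expr_inj; try lia.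
case/orP => [/eqP // | /eqP inv1].
have : theta ^+ (i + j) == theta ^+ 0.
  by rewrite exprD expr0 -invr_eq1 invfM -inv1.
by rewrite theta_expr_inj; lia.
Qed.

Lemma cheb_rootP (c : L) :
  (cheb L n.+1).[c] = 0 <-> exists2 j, (1 <= j <= n)%N & c = twocos theta j.
Proof.
split; last by case=> j jn ->; apply: cheb_twocos.
move=> rootc; set rs := [seq twocos theta j | j <- iota 1 n].
have in_iota j : (j \in iota 1 n) = (1 <= j <= n)%N by rewrite mem_iota; lia.
have [/mapP[j jn ->] | c_notin] := boolP (c \in rs).
  by exists j; rewrite -?in_iota.
have cheb_neq0 : cheb L n.+1 != 0 by rewrite -size_poly_eq0 size_cheb.
have roots : all (root (cheb L n.+1)) (c :: rs).
  apply/allP => x; rewrite inE => /orP[/eqP -> | /mapP[j jn ->]].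
    exact/eqP.
  apply/eqP.
  by apply: cheb_twocos; rewrite -in_iota.
have uniq_roots : uniq (c :: rs).
  rewrite cons_uniq c_notin map_inj_in_uniq ?iota_uniq // => i j iin jin.
  by apply: twocos_inj; rewrite -in_iota.
have := max_poly_roots cheb_neq0 roots uniq_roots.
by rewrite size_cheb /= size_map size_iota ltnn.
Qed.

End ChebRoots.

Lemma sum_delta (R : nzSemiRingType) (N : nat) (w : nat -> R) (k : nat) :
  \sum_(i < N) w i * ((i : nat) == k)%:R = if (k < N)%N then w k else 0.
Proof.
have [klt | kge] := ltnP k N.
  rewrite (bigD1 (Ordinal klt)) //= eqxx mulr1 big1 ?addr0 // => i neq_ik.
  rewrite (_ : (i : nat) == k = false) ?mulr0 //.
  by apply/negbTE; apply: contra neq_ik => /eqP eq_ik; apply/eqP/val_inj.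
rewrite big1 // => i _; rewrite (_ : (i : nat) == k = false) ?mulr0 //.
by have := ltn_ord i; lia.
Qed.

Section TridiagKernel.
Variables (K : fieldType) (n : nat) (b : K).

Definition coord (v : 'rV[K]_n.+1) (k : nat) : K :=
  if (k < n.+1)%N then v 0 (inord k) else 0.

Lemma coord_out (v : 'rV[K]_n.+1) : coord v n.+1 = 0.
Proof. by rewrite /coord ltnn. Qed.


Lemma mul_tridiag_entry (v : 'rV[K]_n.+1) (j : 'I_n.+1) :
  (v *m tridiag n.+1 b) 0 j =
  b * coord v j + (if j : nat is j'.+1 then coord v j' else 0) + coord v j.+1.
Proof.
rewrite mxE.
transitivity (\sum_(i < n.+1) (b * (coord v i * ((i : nat) == j)%:R)
   + coord v i * ((i : nat).+1 == j)%:R + coord v i * ((i : nat) == j.+1)%:R)).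
  apply: eq_bigr => i _; rewrite /coord ltn_ord inord_val !mxE.
  rewrite [(j.+1 == i)%N]eq_sym.
  have -> : (i == j) = ((i : nat) == j) by [].
  case: eqP => e1; case: eqP => e2; case: eqP => e3 /=; try lia;
    by rewrite ?mulr1 ?mulr0 ?addr0 ?add0r ?[_ * b]mulrC.
have coordE k : (if (k < n.+1)%N then coord v k else 0) = coord v k.
  by rewrite /coord; case: (k < n.+1)%N.
rewrite !big_split /= -mulr_sumr !sum_delta !coordE; congr (_ + _ + _).
case: (nat_of_ord j) => [|j']; first by rewrite big1 // => i _; rewrite mulr0.
by under eq_bigr do rewrite eqSS; rewrite sum_delta coordE.
Qed.

(* The solution of the recurrence x_(k+1) = - b x_k - x_(k-1) with
   x_(-1) = 0, x_0 = 1. *)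
Definition solseq (k : nat) : K := (cheb K k.+1).[- b].

Lemma solseq0 : solseq 0 = 1. Proof. by rewrite /solseq /= hornerC. Qed.

Lemma solseq1 : solseq 1 = - b.
Proof. by rewrite /solseq chebSS /= !hornerE subr0. Qed.

Lemma solseqSS (k : nat) : solseq k.+2 = - b * solseq k.+1 - solseq k.
Proof. by rewrite /solseq chebSS !hornerE. Qed.

Lemma ker_tridiag_coord {v : 'rV[K]_n.+1} : v *m tridiag n.+1 b = 0 ->
  forall k, (k <= n.+1)%N -> coord v k = coord v 0 * solseq k.
Proof.
move=> vT0.
have step (j : nat) : (j < n.+1)%N ->
    coord v j.+1 = - b * coord v j - (if j is j'.+1 then coord v j' else 0).
  move=> jlt; have := mul_tridiag_entry v (Ordinal jlt).
  rewrite vT0 mxE /= => /eqP; rewrite eq_sym addrC addr_eq0 => /eqP ->.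
  by rewrite opprD mulNr.
suff pair k : (k <= n)%N ->
    coord v k = coord v 0 * solseq k /\ coord v k.+1 = coord v 0 * solseq k.+1.
  by case=> [|k] kle; [rewrite solseq0 mulr1 | case: (pair k kle)].
elim: k => [_ | k IHk kle].
  by rewrite solseq0 solseq1 step //= subr0 mulr1; split; last ring.
have [IHk0 IHk1] := IHk (ltnW kle); split => //.
by rewrite step // IHk0 IHk1 solseqSS; ring.
Qed.

Lemma solseq_ker : solseq n.+1 = 0 ->
  (\row_(j < n.+1) solseq j) *m tridiag n.+1 b = 0.
Proof.
move=> sol0; set s := \row_(j < n.+1) solseq j.
have coord_s k : (k <= n.+1)%N -> coord s k = solseq k.
  rewrite /coord; case: ltnP => [klt _ | kge kle]; first by rewrite mxE inordK.
  by rewrite (_ : k = n.+1) ?sol0 //; lia.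
apply/rowP => j; have jlt := ltn_ord j.
rewrite mul_tridiag_entry mxE !coord_s //; try lia.
case E: (nat_of_ord j) => [|j']; first by rewrite solseq0 solseq1 addr0; ring.
by rewrite coord_s ?solseqSS; [ring | lia].
Qed.

Lemma unit_tridiag_cheb :
  tridiag n.+1 b \in unitmx <-> (cheb K n.+2).[b] != 0.
Proof.
have solseq_n1 : solseq n.+1 = 0 <-> (cheb K n.+2).[b] = 0.
  rewrite /solseq cheb_oppX; split => [/eqP|->]; last by rewrite mulr0.
  by rewrite mulf_eq0 signr_eq0 => /eqP.
rewrite unitmx_kerP; split => [kerT | cheb_neq0 v vT0].
- apply/eqP => /solseq_n1 /solseq_ker /kerT /rowP /(_ 0).
  by rewrite !mxE solseq0 => /eqP; rewrite oner_eq0.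
- have coord0 : coord v 0 = 0.
    apply/eqP; apply: contraNT cheb_neq0 => v0_neq0; apply/eqP/solseq_n1.
    have := ker_tridiag_coord vT0 n.+1 (leqnn n.+1).
    rewrite coord_out => /esym/eqP.
    by rewrite mulf_eq0 (negbTE v0_neq0) => /eqP.
  apply/rowP => j; rewrite mxE.
  have := ker_tridiag_coord vT0 j (ltnW (ltn_ord j)).
  by rewrite coord0 mul0r /coord ltn_ord inord_val.
Qed.

End TridiagKernel.

Lemma unit_tridiag {L : fieldType} {n : nat} {theta : L} (b : L) :
  (2 * n.+1)%N.-primitive_root theta ->
  tridiag n b \in unitmx <-> forall j, (1 <= j <= n)%N -> b != twocos theta j.
Proof.
case: n => [_ | n theta_prim].
  by split => [_ j | _]; [lia | rewrite unitmxE det_mx00 unitr1].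
rewrite unit_tridiag_cheb; split => [b_nonroot j jn | b_not_twocos].
- by apply: contra b_nonroot => /eqP ->; rewrite (cheb_twocos theta_prim).
- by apply/eqP => /(cheb_rootP theta_prim) [j jn]; apply/eqP/b_not_twocos.
Qed.

Theorem theorem2p4 (F : finFieldType) (n : nat) (a : F)
  (L : fieldType) (f : {rmorphism F -> L}) (mu theta : L) :
  odd #|F| -> (1 <= n)%N -> coprime n.+1 #|F| ->
  mu ^+ 2 = -1 -> (2 * n.+1)%N.-primitive_root theta ->
  is_LCD (gen_Cn n a) <->
  (forall i : nat, (1 <= i <= n)%N ->
     f a != - mu + theta ^+ i + theta ^- i /\ f a != mu + theta ^+ i + theta ^- i).
Proof.
move=> _ _ _ mu2 theta_prim.
rewrite LCD_Cn (Gram_factor f _ _ _ mu2) !(unit_tridiag _ theta_prim).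
have plusE c : (f a + mu != c) = (f a != - mu + c).
  by rewrite [- mu + c]addrC -subr_eq opprK.
have minusE c : (f a - mu != c) = (f a != mu + c).
  by rewrite subr_eq [c + mu]addrC.
split => [[plus minus] i iin | both].
  by rewrite -!addrA -plusE -minusE; split; [apply: plus | apply: minus].
by split => i iin; have [] := both i iin; rewrite -!addrA -plusE -minusE.
Qed.
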